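(* There exists a joint distribution $\mathbf{p}$ of random variables $(Y,\mathbf{B},A,Z^* )$, with $Y\in\{0,1\}$, $A\in\{0,1\}$, $\mathbf{B}$ taking values in $\mathcal{X}^b\subseteq\mathbb{R}^n$, and $Z^*=Z$ if $A=1$ and $Z^*=\texttt{N/A}$ if $A=0$ (where $Z$ is real-valued), such that the model $$f_{\text{csp}}(\mathbf{b},a,z^* )=\begin{cases}\mathbb{E}[Y\mid \mathbf{B}=\mathbf{b},A=1] & \text{if } a=0,\\ \mathbb{E}[Y\mid \mathbf{B}=\mathbf{b},A=1,Z^*=z^*] & \text{if } a=1\end{cases}$$ has strictly larger expected squared loss than the base model $f^*_{\text{base}}(\mathbf{b})=\mathbb{E}[Y\mid \mathbf{B}=\mathbf{b}]$, i.e. $$\mathbb{E}\big[(Y-f^*_{\text{base}}(\mathbf{B}))^2\big]<\mathbb{E}\big[(Y-f_{\text{csp}}(\mathbf{B},A,Z^* ))^2\big].$$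
   Context: Setting: each individual has base features $\mathbf{b}\in\mathcal{X}^b\subseteq\mathbb{R}^n$, an optional real-valued feature $z$, an availability indicator $a\in\{0,1\}$ (whether $z$ was disclosed), and observed imputed value $z^*=z$ if $a=1$ and $z^*=\texttt{N/A}$ if $a=0$; the label is $Y$. $f_{\text{csp}}$ is the model obtained by imposing conditional statistical parity $\mathbb{E}[\hat Y\mid \mathbf{B}=\mathbf{b},A=0]=\mathbb{E}[\hat Y\mid \mathbf{B}=\mathbf{b},A=1]$ together with predicting the conditional mean given all information when $a=1$. *)

From HB Require Import structures.
From mathcomp Require Import all_boot all_order all_algebra.
From mathcomp Require Import reals.
Set Implicit Arguments. Unset Strict Implicit. Unset Printing Implicit Defensive.
Import Order.TTheory GRing.Theory Num.Theory.
Local Open Scope ring_scope.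

(* An outcome (y, b, a, z^* ) : y in {0,1}, b in R^n, a in {0,1},
   z^* : option R, with None standing for N/A. *)
Definition outcome (R : realType) (n : nat) : Type :=
  (bool * 'rV[R]_n * bool * option R)%type.

Section Dist.
Variables (R : realType) (n : nat).
Definition oY (t : outcome R n) : R := (t.1.1.1)%:R.
Definition oB (t : outcome R n) : 'rV[R]_n := t.1.1.2.
Definition oA (t : outcome R n) : bool := t.1.2.
Definition oZ (t : outcome R n) : option R := t.2.

(* A finitely supported distribution: list of (probability mass, outcome). *)
Definition fdist := seq (R * outcome R n).

Definition prob (p : fdist) (P : pred (outcome R n)) : R :=
  \sum_(x <- p | P x.2) x.1.

Definition condEY (p : fdist) (P : pred (outcome R n)) : R :=
  (\sum_(x <- p | P x.2) x.1 * oY x.2) / prob p P.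

Definition sq_loss (p : fdist) (f : outcome R n -> R) : R :=
  \sum_(x <- p) x.1 * (oY x.2 - f x.2) ^+ 2.

Definition valid_dist (p : fdist) : Prop :=
  (forall x, x \in p -> 0 < x.1) /\
  \sum_(x <- p) x.1 = 1 /\
  (forall x, x \in p -> (oA x.2 = false <-> oZ x.2 = None)).

Definition f_base (p : fdist) (t : outcome R n) : R :=
  condEY p (fun s => oB s == oB t).

Definition f_csp (p : fdist) (t : outcome R n) : R :=
  if oA t then condEY p (fun s => [&& oB s == oB t, oA s & oZ s == oZ t])
  else condEY p (fun s => (oB s == oB t) && oA s).

(* f_csp is well defined on the support: P(B = b, A = 1) > 0 for every
   b in the support (the a = 1 conditioning events automatically have
   positive mass since they contain the atom itself). *)
Definition csp_well_defined (p : fdist) : Prop :=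
  forall x, x \in p -> 0 < prob p (fun s => (oB s == oB x.2) && oA s).
End Dist.

(* The counterexample has a single base value b = 0 and two atoms:
   with mass q an individual with Y = 1 who does not disclose z (A = 0),
   and with mass 1 - q an individual with Y = 0 who discloses z = 0 (A = 1).
   The base model predicts E[Y | B = 0] = q everywhere, so its loss is the
   Bernoulli variance q (1 - q).  The parity-constrained model must predict
   for the non-disclosing group what it predicts for the disclosing group,
   namely E[Y | B = 0, A = 1] = 0; it is exact on the second atom but pays
   the full loss 1 on the first, so its loss is q > q (1 - q). *)
From HB Require Import structures.
From mathcomp Require Import all_boot all_order all_algebra.
From mathcomp Require Import reals.
From mathcomp Require Import ring.
Import Order.TTheory GRing.Theory Num.Theory.
Local Open Scope ring_scope.

Section TwoAtomCounterexample.
Variables (R : realType) (n : nat) (q : R).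
Hypotheses (q_gt0 : 0 < q) (q_lt1 : q < 1).

Definition atom_hidden : outcome R n := (true, 0, false, None).

Definition atom_shown : outcome R n := (false, 0, true, Some 0).

Definition witness : fdist R n := [:: (q, atom_hidden); (1 - q, atom_shown)].

Lemma witness_valid : valid_dist witness.
Proof.
split; [|split].
- by move=> x; rewrite !inE => /orP[]/eqP-> //=; rewrite subr_gt0.
- by rewrite !big_cons big_nil /= addr0 subrKC.
- by move=> x; rewrite !inE => /orP[]/eqP->.
Qed.

Lemma prob_shown : prob witness (fun s => (oB s == 0) && oA s) = 1 - q.
Proof. by rewrite /prob !big_cons big_nil /= eqxx /= addr0. Qed.

Lemma witness_csp_well_defined : csp_well_defined witness.
Proof.
by move=> x; rewrite !inE => /orP[]/eqP-> /=; rewrite prob_shown subr_gt0.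
Qed.

(* Both atoms share B = 0, so the base model is the overall mean of Y. *)
Lemma f_base_witness (t : outcome R n) : oB t = 0 -> f_base witness t = q.
Proof.
move=> Bt; rewrite /f_base /condEY /prob Bt !big_cons !big_nil /=.
by rewrite /oY /oB /= eqxx /= mulr1 mulr0 !addr0 subrKC divr1.
Qed.

(* Conditioning on A = 1 (and Z^* = 0) only sees the second atom, where Y = 0. *)
Lemma f_csp_witness (t : outcome R n) :
  t \in [:: atom_hidden; atom_shown] -> f_csp witness t = 0.
Proof.
by rewrite !inE => /orP[]/eqP->;
  rewrite /f_csp /= /condEY !big_cons big_nil /= /oY /oB /oA /= !eqxx /=
    mulr0 addr0 mul0r.
Qed.

Lemma sq_loss_base_witness : sq_loss witness (f_base witness) = q * (1 - q).
Proof.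
rewrite /sq_loss !big_cons big_nil !f_base_witness // /oY /=; ring.
Qed.

(* The parity model errs by 1 on the hidden atom and is exact on the other. *)
Lemma sq_loss_csp_witness : sq_loss witness (f_csp witness) = q.
Proof.
rewrite /sq_loss !big_cons big_nil /= !f_csp_witness ?inE ?eqxx ?orbT //.
rewrite /oY /=; ring.
Qed.

(* q (1 - q) < q because q^2 > 0. *)
Lemma witness_csp_worse :
  sq_loss witness (f_base witness) < sq_loss witness (f_csp witness).
Proof.
by rewrite sq_loss_base_witness sq_loss_csp_witness mulrBr mulr1 gtrBl mulr_gt0.
Qed.

End TwoAtomCounterexample.

Theorem lemma3p1 (R : realType) (n : nat) :
  exists p : fdist R n,
    valid_dist p /\ csp_well_defined p /\
    sq_loss p (f_base p) < sq_loss p (f_csp p).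
Proof.
have half_gt0 : 0 < 2^-1 :> R by rewrite invr_gt0 ltr0n.
have half_lt1 : 2^-1 < 1 :> R by rewrite invf_lt1 ?ltr0n ?ltr1n.
exists (witness R n 2^-1); split; [|split].
- exact: witness_valid.
- exact: witness_csp_well_defined.
- exact: witness_csp_worse.
Qed.
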